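(* The category $\mathsf{XMod}(\mathsf{GpGd})$ of crossed modules over group-groupoids is equivalent to the category $\mathsf{XSq}(\mathsf{Gp})$ of crossed squares over groups.
   Context: A group-groupoid $G$ is a groupoid with set of arrows $G$ and set of objects $G_0$, source and target maps $d_0,d_1\colon G\to G_0$, identity map $\varepsilon\colon G_0\to G$, and composition $b\circ a$ defined when $d_1(a)=d_0(b)$, such that $G$ and $G_0$ are groups (written additively) and all groupoid structure maps are group homomorphisms. A morphism of group-groupoids is a functor that is a group homomorphism on arrows and objects. A derived action of a group-groupoid $H$ on a group-groupoid $G$ is an action $b\cdot a$ of the group of arrows $H$ on the group of arrows $G$ by automorphisms such that, for a suitable group structure on $G_0\times H_0$, the product groupoid $G\times H$ with addition $(a,b)+(a_1,b_1)=(a+b\cdot a_1,b+b_1)$ is a group-groupoid. A crossed module over group-groupoids is a triple $(G,H,\partial)$ with $G,H$ group-groupoids, a derived action of $H$ on $G$, and a morphism of group-groupoids $\partial=(\partial_1,\partial_0)\colon G\to H$ such that $\partial_1(b\cdot a)=b+\partial_1(a)-b$ and $\partial_1(a)\cdot a_1=a+a_1-a$ for all arrows $a,a_1\in G$, $b\in H$. Morphisms in $\mathsf{XMod}(\mathsf{GpGd})$ are pairs $(f,g)$ of group-groupoid morphisms $f\colon G\to G'$, $g\colon H\to H'$ with $g\partial=\partial'f$ and $f(b\cdot a)=g(b)\cdot f(a)$. A crossed square over groups consists of group homomorphisms $\lambda\colon L\to M$, $\lambda'\colon L\to N$, $\mu\colon M\to P$, $\nu\colon N\to P$ with $\nu\lambda'=\mu\lambda$,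 left actions of $P$ on $L,M,N$ by automorphisms (whence $M$ acts on $L$ and $N$ via $\mu$, and $N$ acts on $L$ and $M$ via $\nu$), and a function $h\colon M\times N\to L$, such that for all $l\in L$, $m,m'\in M$, $n,n'\in N$, $p\in P$: (CS1) $\lambda,\lambda'$ are $P$-equivariant and $\mu$, $\nu$, $\mu\lambda$ are crossed modules of groups; (CS2) $\lambda h(m,n)=m+n\cdot(-m)$ and $\lambda' h(m,n)=m\cdot n-n$; (CS3) $h(\lambda(l),n)=l+n\cdot(-l)$ and $h(m,\lambda'(l))=m\cdot l-l$; (CS4) $h(m+m',n)=m\cdot h(m',n)+h(m,n)$ and $h(m,n+n')=h(m,n)+n\cdot h(m,n')$; (CS5) $h(p\cdot m,p\cdot n)=p\cdot h(m,n)$. A morphism of crossed squares is a quadruple of group homomorphisms $f_L,f_M,f_N,f_P$ commuting with the four maps of the squares, equivariant with respect to all the actions, and satisfying $f_L(h_1(m,n))=h_2(f_M(m),f_N(n))$. $\mathsf{XSq}(\mathsf{Gp})$ denotes the resulting category. *)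

From Stdlib Require Import Utf8.
Set Implicit Arguments.
Unset Strict Implicit.

(** * Groups (written additively, not necessarily abelian) *)

Record IsGroup (T : Type) (add : T -> T -> T) (zero : T) (neg : T -> T) : Prop := {
  g_assoc : forall x y z, add x (add y z) = add (add x y) z;
  g_zero_l : forall x, add zero x = x;
  g_zero_r : forall x, add x zero = x;
  g_neg_l : forall x, add (neg x) x = zero;
  g_neg_r : forall x, add x (neg x) = zero }.

Record Group := {
  carrier :> Type;
  gadd : carrier -> carrier -> carrier;
  gzero : carrier;
  gneg : carrier -> carrier;
  gax : IsGroup gadd gzero gneg }.
Arguments gadd {g} _ _.
Arguments gzero {g}.
Arguments gneg {g} _.

Definition IsHom (A B : Type) (addA : A -> A -> A) (addB : B -> B -> B) (f : A -> B) : Prop :=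
  forall x y, f (addA x y) = addB (f x) (f y).

Definition GpHom (G H : Group) (f : G -> H) : Prop := IsHom (@gadd G) (@gadd H) f.

Record IsAction (P X : Group) (act : P -> X -> X) : Prop := {
  act_zero : forall x, act gzero x = x;
  act_add : forall p q x, act (gadd p q) x = act p (act q x);
  act_hom : forall p x y, act p (gadd x y) = gadd (act p x) (act p y) }.

Record IsXModGp (X P : Group) (d : X -> P) (act : P -> X -> X) : Prop := {
  xmg_act : IsAction act;
  xmg_hom : GpHom d;
  xmg_equiv : forall p x, d (act p x) = gadd (gadd p (d x)) (gneg p);
  xmg_peiffer : forall x x', act (d x) x' = gadd (gadd x x') (gneg x) }.

(** * Group-groupoids *)

(** Groupoid with arrows [A], objects [O], source [s] (= d0), target [t] (= d1),
    identities [e] (= epsilon) and composition [c b a] = "b o a", defined (i.e.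
    constrained) only when [t a = s b]; together with the requirement that
    all structure maps are homomorphisms for the given group laws. *)
Record IsGpGd (A O : Type) (addA : A -> A -> A) (addO : O -> O -> O)
    (s t : A -> O) (e : O -> A) (c : A -> A -> A) : Prop := {
  gg_s_id : forall x, s (e x) = x;
  gg_t_id : forall x, t (e x) = x;
  gg_s_comp : forall a b, t a = s b -> s (c b a) = s a;
  gg_t_comp : forall a b, t a = s b -> t (c b a) = t b;
  gg_id_l : forall a, c (e (t a)) a = a;
  gg_id_r : forall a, c a (e (s a)) = a;
  gg_assoc : forall a b d, t a = s b -> t b = s d -> c d (c b a) = c (c d b) a;
  gg_inv : forall a, exists a', s a' = t a /\ t a' = s a /\
             c a' a = e (s a) /\ c a a' = e (t a);
  gg_s_hom : IsHom addA addO s;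
  gg_t_hom : IsHom addA addO t;
  gg_e_hom : IsHom addO addA e;
  gg_c_hom : forall a b a1 b1, t a = s b -> t a1 = s b1 ->
      c (addA b b1) (addA a a1) = addA (c b a) (c b1 a1) }.

Record GpGd := {
  arr : Group;
  obj : Group;
  src : arr -> obj;
  tgt : arr -> obj;
  idn : obj -> arr;
  comp : arr -> arr -> arr;
  gpgd_ax : IsGpGd (@gadd arr) (@gadd obj) src tgt idn comp }.
Arguments src : clear implicits.
Arguments tgt : clear implicits.
Arguments idn : clear implicits.
Arguments comp : clear implicits.

Record IsGpGdMor (G H : GpGd) (f1 : arr G -> arr H) (f0 : obj G -> obj H) : Prop := {
  gm_hom1 : GpHom f1;
  gm_hom0 : GpHom f0;
  gm_src : forall a, src H (f1 a) = f0 (src G a);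
  gm_tgt : forall a, tgt H (f1 a) = f0 (tgt G a);
  gm_idn : forall x, f1 (idn G x) = idn H (f0 x);
  gm_comp : forall a b, tgt G a = src G b -> f1 (comp G b a) = comp H (f1 b) (f1 a) }.

Section Derived.
Variables (G H : GpGd) (act : arr H -> arr G -> arr G).

Definition sd_add (u v : arr G * arr H) : arr G * arr H :=
  (gadd (fst u) (act (snd u) (fst v)), gadd (snd u) (snd v)).
Definition sd_zero : arr G * arr H := (gzero, gzero).
Definition sd_neg (u : arr G * arr H) : arr G * arr H :=
  (act (gneg (snd u)) (gneg (fst u)), gneg (snd u)).

Definition prod_src (u : arr G * arr H) : obj G * obj H := (src G (fst u), src H (snd u)).
Definition prod_tgt (u : arr G * arr H) : obj G * obj H := (tgt G (fst u), tgt H (snd u)).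
Definition prod_idn (x : obj G * obj H) : arr G * arr H := (idn G (fst x), idn H (snd x)).
Definition prod_comp (v u : arr G * arr H) : arr G * arr H :=
  (comp G (fst v) (fst u), comp H (snd v) (snd u)).
End Derived.

Definition IsDerivedAction (G H : GpGd) (act : arr H -> arr G -> arr G) : Prop :=
  IsAction act /\
  exists (addO : obj G * obj H -> obj G * obj H -> obj G * obj H)
         (zeroO : obj G * obj H) (negO : obj G * obj H -> obj G * obj H),
    IsGroup addO zeroO negO /\
    IsGroup (sd_add act) (sd_zero G H) (sd_neg act) /\
    IsGpGd (sd_add act) addO (@prod_src G H) (@prod_tgt G H)
           (@prod_idn G H) (@prod_comp G H).

(** * Crossed modules over group-groupoids *)

Record XModGG := {
  xG : GpGd;
  xH : GpGd;
  xact : arr xH -> arr xG -> arr xG;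
  xact_ax : IsDerivedAction xact;
  xd1 : arr xG -> arr xH;
  xd0 : obj xG -> obj xH;
  xd_mor : IsGpGdMor xd1 xd0;
  xd_equiv : forall (b : arr xH) (a : arr xG),
      xd1 (xact b a) = gadd (gadd b (xd1 a)) (gneg b);
  xd_peiffer : forall a a1 : arr xG,
      xact (xd1 a) a1 = gadd (gadd a a1) (gneg a) }.
Arguments xact : clear implicits.
Arguments xd1 : clear implicits.
Arguments xd0 : clear implicits.

Record XModMor (X Y : XModGG) := {
  mf1 : arr (xG X) -> arr (xG Y);
  mf0 : obj (xG X) -> obj (xG Y);
  mg1 : arr (xH X) -> arr (xH Y);
  mg0 : obj (xH X) -> obj (xH Y);
  mf_mor : IsGpGdMor mf1 mf0;
  mg_mor : IsGpGdMor mg1 mg0;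
  m_d1 : forall a, mg1 (xd1 X a) = xd1 Y (mf1 a);
  m_d0 : forall x, mg0 (xd0 X x) = xd0 Y (mf0 x);
  m_act : forall b a, mf1 (xact X b a) = xact Y (mg1 b) (mf1 a) }.

(** * Crossed squares over groups *)

Record IsXSq (L M N P : Group) (lam : L -> M) (lam' : L -> N) (mu : M -> P) (nu : N -> P)
    (actL : P -> L -> L) (actM : P -> M -> M) (actN : P -> N -> N) (h : M -> N -> L) : Prop := {
  sq_hom_lam : GpHom lam;
  sq_hom_lam' : GpHom lam';
  sq_hom_mu : GpHom mu;
  sq_hom_nu : GpHom nu;
  sq_comm : forall l, nu (lam' l) = mu (lam l);
  sq_actL : IsAction actL;
  sq_actM : IsAction actM;
  sq_actN : IsAction actN;
  cs1_lam : forall p l, lam (actL p l) = actM p (lam l);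
  cs1_lam' : forall p l, lam' (actL p l) = actN p (lam' l);
  cs1_mu : IsXModGp mu actM;
  cs1_nu : IsXModGp nu actN;
  cs1_mulam : IsXModGp (fun l => mu (lam l)) actL;
  (* CS2 ; M acts via mu, N acts via nu *)
  cs2_l : forall m n, lam (h m n) = gadd m (actM (nu n) (gneg m));
  cs2_r : forall m n, lam' (h m n) = gadd (actN (mu m) n) (gneg n);
  cs3_l : forall l n, h (lam l) n = gadd l (actL (nu n) (gneg l));
  cs3_r : forall m l, h m (lam' l) = gadd (actL (mu m) l) (gneg l);
  cs4_l : forall m m' n, h (gadd m m') n = gadd (actL (mu m) (h m' n)) (h m n);
  cs4_r : forall m n n', h m (gadd n n') = gadd (h m n) (actL (nu n) (h m n'));
  cs5 : forall p m n, h (actM p m) (actN p n) = actL p (h m n) }.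

Record XSq := {
  sqL : Group; sqM : Group; sqN : Group; sqP : Group;
  sq_lam : sqL -> sqM;
  sq_lam' : sqL -> sqN;
  sq_mu : sqM -> sqP;
  sq_nu : sqN -> sqP;
  sq_aL : sqP -> sqL -> sqL;
  sq_aM : sqP -> sqM -> sqM;
  sq_aN : sqP -> sqN -> sqN;
  sq_h : sqM -> sqN -> sqL;
  sq_ax : IsXSq sq_lam sq_lam' sq_mu sq_nu sq_aL sq_aM sq_aN sq_h }.
Arguments sq_lam : clear implicits.
Arguments sq_lam' : clear implicits.
Arguments sq_mu : clear implicits.
Arguments sq_nu : clear implicits.
Arguments sq_aL : clear implicits.
Arguments sq_aM : clear implicits.
Arguments sq_aN : clear implicits.
Arguments sq_h : clear implicits.

Record XSqMor (S T : XSq) := {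
  fL : sqL S -> sqL T;
  fM : sqM S -> sqM T;
  fN : sqN S -> sqN T;
  fP : sqP S -> sqP T;
  fL_hom : GpHom fL;
  fM_hom : GpHom fM;
  fN_hom : GpHom fN;
  fP_hom : GpHom fP;
  f_lam : forall l, fM (sq_lam S l) = sq_lam T (fL l);
  f_lam' : forall l, fN (sq_lam' S l) = sq_lam' T (fL l);
  f_mu : forall m, fP (sq_mu S m) = sq_mu T (fM m);
  f_nu : forall n, fP (sq_nu S n) = sq_nu T (fN n);
  f_aL : forall p l, fL (sq_aL S p l) = sq_aL T (fP p) (fL l);
  f_aM : forall p m, fM (sq_aM S p m) = sq_aM T (fP p) (fM m);
  f_aN : forall p n, fN (sq_aN S p n) = sq_aN T (fP p) (fN n);
  f_h : forall m n, fL (sq_h S m n) = sq_h T (fM m) (fN n) }.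

Lemma IsGpGdMor_id (G : GpGd) : IsGpGdMor (G:=G) (H:=G) (fun a => a) (fun x => x).
Proof. split; unfold GpHom, IsHom; auto. Qed.

Lemma IsGpGdMor_comp (G H K : GpGd) f1 f0 g1 g0 :
  IsGpGdMor (G:=G) (H:=H) f1 f0 -> IsGpGdMor (G:=H) (H:=K) g1 g0 ->
  IsGpGdMor (G:=G) (H:=K) (fun a => g1 (f1 a)) (fun x => g0 (f0 x)).
Proof.
  intros [h1 h0 s t e c] [h1' h0' s' t' e' c'].
  split; unfold GpHom, IsHom in *; intros.
  - rewrite h1, h1'; reflexivity.
  - rewrite h0, h0'; reflexivity.
  - rewrite s', s; reflexivity.
  - rewrite t', t; reflexivity.
  - rewrite e, e'; reflexivity.
  - rewrite c by assumption. apply c'. rewrite t, s, H0. reflexivity.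
Qed.

Definition XModMor_id (X : XModGG) : XModMor X X.
Proof.
  refine {| mf1 := fun a => a; mf0 := fun x => x; mg1 := fun a => a; mg0 := fun x => x;
            mf_mor := IsGpGdMor_id _; mg_mor := IsGpGdMor_id _ |}; reflexivity.
Defined.

Definition XModMor_comp (X Y Z : XModGG) (g : XModMor Y Z) (f : XModMor X Y) : XModMor X Z.
Proof.
  refine {| mf1 := fun a => mf1 g (mf1 f a); mf0 := fun x => mf0 g (mf0 f x);
            mg1 := fun a => mg1 g (mg1 f a); mg0 := fun x => mg0 g (mg0 f x);
            mf_mor := IsGpGdMor_comp (mf_mor f) (mf_mor g);
            mg_mor := IsGpGdMor_comp (mg_mor f) (mg_mor g) |}; intros.
  - rewrite m_d1, m_d1; reflexivity.
  - rewrite m_d0, m_d0; reflexivity.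
  - rewrite m_act, m_act; reflexivity.
Defined.

Definition XModMor_eq (X Y : XModGG) (f g : XModMor X Y) : Prop :=
  (forall a, mf1 f a = mf1 g a) /\ (forall x, mf0 f x = mf0 g x) /\
  (forall b, mg1 f b = mg1 g b) /\ (forall y, mg0 f y = mg0 g y).

Definition XSqMor_id (S : XSq) : XSqMor S S.
Proof.
  refine {| fL := fun x => x; fM := fun x => x; fN := fun x => x; fP := fun x => x |};
  unfold GpHom, IsHom; reflexivity.
Defined.

Definition XSqMor_comp (S T U : XSq) (g : XSqMor T U) (f : XSqMor S T) : XSqMor S U.
Proof.
  refine {| fL := fun x => fL g (fL f x); fM := fun x => fM g (fM f x);
            fN := fun x => fN g (fN f x); fP := fun x => fP g (fP f x) |};
  unfold GpHom, IsHom; intros;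
  first [ rewrite fL_hom, fL_hom | rewrite fM_hom, fM_hom | rewrite fN_hom, fN_hom
        | rewrite fP_hom, fP_hom | rewrite f_lam, f_lam | rewrite f_lam', f_lam'
        | rewrite f_mu, f_mu | rewrite f_nu, f_nu | rewrite f_aL, f_aL
        | rewrite f_aM, f_aM | rewrite f_aN, f_aN | rewrite f_h, f_h ]; reflexivity.
Defined.

Definition XSqMor_eq (S T : XSq) (f g : XSqMor S T) : Prop :=
  (forall x, fL f x = fL g x) /\ (forall x, fM f x = fM g x) /\
  (forall x, fN f x = fN g x) /\ (forall x, fP f x = fP g x).

(** A category presented by objects, hom-types, an equality of morphisms
    (here: equality of all underlying maps), identities and composition. *)
Record Cat := {
  cObj : Type;
  cHom : cObj -> cObj -> Type;
  cEq : forall X Y, cHom X Y -> cHom X Y -> Prop;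
  cId : forall X, cHom X X;
  cComp : forall X Y Z, cHom Y Z -> cHom X Y -> cHom X Z }.
Arguments cHom : clear implicits.
Arguments cEq {c X Y} _ _.
Arguments cId {c} X.
Arguments cComp {c X Y Z} _ _.

Record Functor (C D : Cat) := {
  fobj : cObj C -> cObj D;
  fmap : forall X Y, cHom C X Y -> cHom D (fobj X) (fobj Y);
  fmap_eq : forall X Y (f g : cHom C X Y), cEq f g -> cEq (fmap f) (fmap g);
  fmap_id : forall X, cEq (fmap (cId X)) (cId (fobj X));
  fmap_comp : forall X Y Z (g : cHom C Y Z) (f : cHom C X Y),
      cEq (fmap (cComp g f)) (cComp (fmap g) (fmap f)) }.
Arguments fobj {C D} _ _.
Arguments fmap {C D} _ {X Y} _.

Definition CatEquivalence (C D : Cat) : Prop :=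
  exists (F : Functor C D) (G : Functor D C),
    (exists (eta : forall X, cHom C X (fobj G (fobj F X)))
            (eta' : forall X, cHom C (fobj G (fobj F X)) X),
        (forall X, cEq (cComp (eta' X) (eta X)) (cId X)) /\
        (forall X, cEq (cComp (eta X) (eta' X)) (cId _)) /\
        (forall X Y (f : cHom C X Y),
            cEq (cComp (fmap G (fmap F f)) (eta X)) (cComp (eta Y) f))) /\
    (exists (eps : forall Y, cHom D (fobj F (fobj G Y)) Y)
            (eps' : forall Y, cHom D Y (fobj F (fobj G Y))),
        (forall Y, cEq (cComp (eps' Y) (eps Y)) (cId _)) /\
        (forall Y, cEq (cComp (eps Y) (eps' Y)) (cId Y)) /\
        (forall X Y (g : cHom D X Y),
            cEq (cComp g (eps X)) (cComp (eps Y) (fmap F (fmap G g))))).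

Definition XMod_GpGd : Cat :=
  {| cObj := XModGG; cHom := XModMor; cEq := XModMor_eq;
     cId := XModMor_id; cComp := XModMor_comp |}.

Definition XSq_Gp : Cat :=
  {| cObj := XSq; cHom := XSqMor; cEq := XSqMor_eq;
     cId := XSqMor_id; cComp := XSqMor_comp |}.

(* A crossed module [(G, H, d)] over group-groupoids gives the crossed square with
   [ker src_G -> G_0] and [ker src_H -> H_0] (target maps) as vertical sides and [d] as
   horizontal sides; [H_0] acts through identity arrows and [h (m, n) = e m - n . e m].
   Two consequences of the interchange law make this work: arrows out of [0] commute with
   arrows into [0], and an arrow acts on arrows out of [0] only through its target.
   Conversely, a crossed square gives the crossed modules of groups [L -> M] and [N -> P],
   hence the group-groupoids [L x| M] and [N x| P], on which [N x| P] acts via the actions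
   of [P] and the map [h].  Both composites are isomorphic to the identity because every
   arrow of a group-groupoid splits uniquely as [(a - e (s a)) + e (s a)]. *)

From Stdlib Require Import ProofIrrelevance.
Set Implicit Arguments.
Unset Strict Implicit.

Declare Scope group_scope.
Notation "x + y" := (gadd x y) : group_scope.
Notation "- x" := (gneg x) : group_scope.
Notation "x - y" := (gadd x (gneg y)) : group_scope.
Open Scope group_scope.

(** * Groups, homomorphisms and actions *)

Section GroupTheory.
Variable G : Group.
Implicit Types x y z : G.

Lemma gaddA x y z : x + (y + z) = x + y + z.
Proof. apply (g_assoc (gax G)). Qed.
Lemma gadd0l x : gzero + x = x. Proof. apply (g_zero_l (gax G)). Qed.
Lemma gadd0r x : x + gzero = x. Proof. apply (g_zero_r (gax G)). Qed.
Lemma gaddNl x : - x + x = gzero. Proof. apply (g_neg_l (gax G)). Qed.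
Lemma gaddNr x : x + - x = gzero. Proof. apply (g_neg_r (gax G)). Qed.

Lemma gaddKl x y : - x + (x + y) = y.
Proof. rewrite gaddA, gaddNl, gadd0l; reflexivity. Qed.
Lemma gaddNKl x y : x + (- x + y) = y.
Proof. rewrite gaddA, gaddNr, gadd0l; reflexivity. Qed.

Lemma gaddIl x y z : x + y = x + z -> y = z.
Proof. intro E. rewrite <- (gaddKl x y), E, gaddKl; reflexivity. Qed.

Lemma gneg_unique x y : x + y = gzero -> y = - x.
Proof. intro E. apply (gaddIl (x:=x)). rewrite E, gaddNr; reflexivity. Qed.
Lemma gnegK x : - - x = x.
Proof. symmetry. apply gneg_unique, gaddNl. Qed.
Lemma gnegD x y : - (x + y) = - y + - x.
Proof. symmetry. apply gneg_unique. rewrite <- gaddA, gaddNKl, gaddNr; reflexivity. Qed.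
Lemma gneg0 : - (gzero : G) = gzero.
Proof. symmetry. apply gneg_unique, gadd0l. Qed.
Lemma gaddLR x y z : x + y = z -> y = - x + z.
Proof. intro E; rewrite <- E, gaddKl; reflexivity. Qed.
End GroupTheory.

(* Normal form: right-associated sums, with cancellable neighbours removed. *)
Ltac gsimpl := repeat progress
  (rewrite <- ?gaddA, ?gadd0l, ?gadd0r, ?gnegK, ?gnegD, ?gneg0,
           ?gaddKl, ?gaddNKl, ?gaddNr, ?gaddNl).

Section Homomorphisms.
Variables (G H : Group) (f : G -> H) (hf : GpHom f).

Lemma hom0 : f gzero = gzero.
Proof. apply (gaddIl (x:=f gzero)). rewrite <- hf, !gadd0r; reflexivity. Qed.
Lemma homN x : f (- x) = - f x.
Proof. apply gneg_unique. rewrite <- hf, gaddNr. apply hom0. Qed.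
End Homomorphisms.

Section Actions.
Variables (P X : Group) (act : P -> X -> X) (ha : IsAction act).

Lemma act0 p : act p gzero = gzero.
Proof. apply (hom0 (f := act p)); intros x y; apply (act_hom ha). Qed.
Lemma actN p x : act p (- x) = - act p x.
Proof. apply (homN (f := act p)); intros x' y; apply (act_hom ha). Qed.
Lemma actA p q x : act p (act q x) = act (p + q) x.
Proof. symmetry; apply (act_add ha). Qed.
Lemma actNK p x : act (- p) (act p x) = x.
Proof. rewrite actA, gaddNl; apply (act_zero ha). Qed.
End Actions.

Lemma proj1_sig_inj (A : Type) (P : A -> Prop) (x y : {a | P a}) :
  proj1_sig x = proj1_sig y -> x = y.
Proof. destruct x, y; simpl; intros ->. f_equal. apply proof_irrelevance. Qed.

Ltac sig_ext := apply proj1_sig_inj; simpl.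

Section Kernel.
Variables (G H : Group) (f : G -> H) (hf : GpHom f).

Definition Ker : Type := { x : G | f x = gzero }.

Lemma ker_add_proof (x y : Ker) : f (proj1_sig x + proj1_sig y) = gzero.
Proof. rewrite hf, (proj2_sig x), (proj2_sig y). apply gadd0l. Qed.
Lemma ker_neg_proof (x : Ker) : f (- proj1_sig x) = gzero.
Proof. rewrite (homN hf), (proj2_sig x). apply gneg0. Qed.

Definition ker_add (x y : Ker) : Ker := exist _ _ (ker_add_proof x y).
Definition ker_zero : Ker := exist _ _ (hom0 hf).
Definition ker_neg (x : Ker) : Ker := exist _ _ (ker_neg_proof x).

Lemma ker_group : IsGroup ker_add ker_zero ker_neg.
Proof.
  split; intros; sig_ext.
  - apply gaddA.
  - apply gadd0l.
  - apply gadd0r.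
  - apply gaddNl.
  - apply gaddNr.
Qed.

Definition KerG : Group :=
  {| carrier := Ker; gadd := ker_add; gzero := ker_zero; gneg := ker_neg; gax := ker_group |}.
End Kernel.

Section Semidirect.
Variables (X P : Group) (act : P -> X -> X) (ha : IsAction act).

Definition sdadd (u v : X * P) : X * P := (fst u + act (snd u) (fst v), snd u + snd v).
Definition sdzero : X * P := (gzero, gzero).
Definition sdneg (u : X * P) : X * P := (act (- snd u) (- fst u), - snd u).

Lemma sd_group : IsGroup sdadd sdzero sdneg.
Proof.
  unfold sdadd, sdzero, sdneg.
  split; intros; destruct x; try destruct y; try destruct z; simpl; f_equal;
    rewrite ?(act_hom ha), ?(actN ha), ?(actA ha), ?(act0 ha); gsimpl;
    rewrite ?(act_zero ha); gsimpl; reflexivity.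
Qed.

Definition SemidirectG : Group :=
  {| carrier := X * P; gadd := sdadd; gzero := sdzero; gneg := sdneg; gax := sd_group |}.
End Semidirect.

(** * Group-groupoids *)

Section GpGdTheory.
Variable G : GpGd.
Notation s := (src G). Notation t := (tgt G). Notation e := (idn G). Notation c := (comp G).

Lemma src_hom : GpHom s. Proof. exact (gg_s_hom (gpgd_ax G)). Qed.
Lemma tgt_hom : GpHom t. Proof. exact (gg_t_hom (gpgd_ax G)). Qed.
Lemma idn_hom : GpHom e. Proof. exact (gg_e_hom (gpgd_ax G)). Qed.
Lemma src_idn x : s (e x) = x. Proof. apply (gg_s_id (gpgd_ax G)). Qed.
Lemma tgt_idn x : t (e x) = x. Proof. apply (gg_t_id (gpgd_ax G)). Qed.
Lemma srcD x y : s (x + y) = s x + s y. Proof. apply src_hom. Qed.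
Lemma tgtD x y : t (x + y) = t x + t y. Proof. apply tgt_hom. Qed.
Lemma idnD x y : e (x + y) = e x + e y. Proof. apply idn_hom. Qed.
Lemma src0 : s gzero = gzero. Proof. apply hom0, src_hom. Qed.
Lemma tgt0 : t gzero = gzero. Proof. apply hom0, tgt_hom. Qed.
Lemma idn0 : e gzero = gzero. Proof. apply hom0, idn_hom. Qed.
Lemma srcN x : s (- x) = - s x. Proof. apply homN, src_hom. Qed.
Lemma tgtN x : t (- x) = - t x. Proof. apply homN, tgt_hom. Qed.
Lemma idnN x : e (- x) = - e x. Proof. apply homN, idn_hom. Qed.

Lemma idn_inj x y : e x = e y -> x = y.
Proof. intro E. rewrite <- (src_idn x), <- (src_idn y), E. reflexivity. Qed.

Lemma comp0l a : t a = gzero -> c gzero a = a.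
Proof. intro E. rewrite <- idn0, <- E. apply (gg_id_l (gpgd_ax G)). Qed.
Lemma comp0r a : s a = gzero -> c a gzero = a.
Proof. intro E. rewrite <- idn0, <- E. apply (gg_id_r (gpgd_ax G)). Qed.

(* Split [b o a] as [b o e (t a) + 0 o (- e (t a) + a)] and use the interchange law. *)
Lemma compE a b : t a = s b -> c b a = b - e (s b) + a.
Proof.
  intro Eab.
  assert (Ta : t (- e (t a) + a) = gzero) by (rewrite tgtD, tgtN, tgt_idn, gaddNl; reflexivity).
  assert (E : c (b + gzero) (e (t a) + (- e (t a) + a)) =
              c b (e (t a)) + c gzero (- e (t a) + a)).
  { apply (gg_c_hom (gpgd_ax G)).
    - rewrite tgt_idn; exact Eab.
    - rewrite Ta, src0; reflexivity. }
  rewrite gadd0r, gaddNKl in E. rewrite E, comp0l by exact Ta.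
  rewrite Eab, (gg_id_r (gpgd_ax G)). gsimpl. reflexivity.
Qed.

(* Compute [k o l] in two ways by the interchange law. *)
Lemma ker_src_tgt_commute k l : s k = gzero -> t l = gzero -> k + l = l + k.
Proof.
  intros Hk Hl.
  assert (E1 : c (k + gzero) (gzero + l) = c k gzero + c gzero l).
  { apply (gg_c_hom (gpgd_ax G)); [rewrite tgt0, Hk | rewrite Hl, src0]; reflexivity. }
  assert (E2 : c (gzero + k) (l + gzero) = c gzero l + c k gzero).
  { apply (gg_c_hom (gpgd_ax G)); [rewrite Hl, src0 | rewrite tgt0, Hk]; reflexivity. }
  rewrite gadd0r, gadd0l in E1, E2. rewrite E1, comp0r, comp0l in E2 by assumption.
  exact E2.
Qed.

(* [- k + e (t k)] is an arrow into [0], so it commutes with [k']. *)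
Lemma ker_src_conj_idn k k' : s k = gzero -> s k' = gzero ->
  e (t k) + k' - e (t k) = k + k' - k.
Proof.
  intros Hk Hk'.
  assert (E := ker_src_tgt_commute (k:=k') (l:= - k + e (t k)) Hk').
  rewrite tgtD, tgtN, tgt_idn, gaddNl in E. specialize (E eq_refl).
  apply (gaddIl (x:= - k)). gsimpl. rewrite gaddA, gaddA, <- E. gsimpl. reflexivity.
Qed.
End GpGdTheory.

Section GpGdOfXModGp.
Variables (X P : Group) (d : X -> P) (act : P -> X -> X) (hx : IsXModGp d act).

Definition xmod_src (u : SemidirectG (xmg_act hx)) : P := snd u.
Definition xmod_tgt (u : SemidirectG (xmg_act hx)) : P := d (fst u) + snd u.
Definition xmod_idn (p : P) : SemidirectG (xmg_act hx) := (gzero, p).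
Definition xmod_comp (v u : SemidirectG (xmg_act hx)) : SemidirectG (xmg_act hx) :=
  (fst v + fst u, snd u).

Lemma xmod_gpgd_ax : IsGpGd (@gadd (SemidirectG (xmg_act hx))) (@gadd P)
  xmod_src xmod_tgt xmod_idn xmod_comp.
Proof.
  pose proof (xmg_act hx) as ha; pose proof (xmg_hom hx) as hd.
  unfold xmod_src, xmod_tgt, xmod_idn, xmod_comp.
  split; simpl; unfold sdadd; simpl.
  - reflexivity.
  - intro p. rewrite (hom0 hd); apply gadd0l.
  - reflexivity.
  - intros a b Eab. rewrite <- Eab, hd; gsimpl; reflexivity.
  - intros [x p]; simpl; rewrite gadd0l; reflexivity.
  - intros [x p]; simpl; rewrite gadd0r; reflexivity.
  - intros; rewrite gaddA; reflexivity.
  - intros [x p]; simpl.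
    exists (- x, d x + p); simpl. rewrite (homN hd), gaddKl.
    repeat split; f_equal; gsimpl; reflexivity.
  - intros u v; reflexivity.
  - intros [x p] [y q]; simpl. rewrite hd, (xmg_equiv hx). gsimpl. reflexivity.
  - intros x y; simpl; rewrite (act0 ha), gadd0l; reflexivity.
  - intros [x p] [y q] [x1 p1] [y1 q1]; simpl; intros <- <-.
    f_equal. rewrite (act_add ha), (xmg_peiffer hx), (act_hom ha). gsimpl. reflexivity.
Qed.

Definition xmod_gpgd : GpGd :=
  {| arr := SemidirectG (xmg_act hx); obj := P; src := xmod_src; tgt := xmod_tgt;
     idn := xmod_idn; comp := xmod_comp; gpgd_ax := xmod_gpgd_ax |}.
End GpGdOfXModGp.

Lemma prod_gpgd (G H : GpGd) addA addO :
  IsHom addA addO (@prod_src G H) -> IsHom addA addO (@prod_tgt G H) ->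
  IsHom addO addA (@prod_idn G H) ->
  (forall a b a1 b1, prod_tgt a = prod_src b -> prod_tgt a1 = prod_src b1 ->
     prod_comp (addA b b1) (addA a a1) = addA (prod_comp b a) (prod_comp b1 a1)) ->
  IsGpGd addA addO (@prod_src G H) (@prod_tgt G H) (@prod_idn G H) (@prod_comp G H).
Proof.
  intros Hs Ht He Hc. pose proof (gpgd_ax G) as AG; pose proof (gpgd_ax H) as AH.
  unfold prod_src, prod_tgt, prod_idn, prod_comp in *.
  split; auto.
  - intros [x y]; simpl; rewrite !src_idn; reflexivity.
  - intros [x y]; simpl; rewrite !tgt_idn; reflexivity.
  - intros a b E; injection E; intros; simpl; rewrite !(gg_s_comp AG), !(gg_s_comp AH); auto.
  - intros a b E; injection E; intros; simpl; rewrite !(gg_t_comp AG), !(gg_t_comp AH); auto.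
  - intros [a b]; simpl; rewrite (gg_id_l AG), (gg_id_l AH); reflexivity.
  - intros [a b]; simpl; rewrite (gg_id_r AG), (gg_id_r AH); reflexivity.
  - intros a b d E E'; injection E; injection E'; intros; simpl.
    rewrite (gg_assoc AG), (gg_assoc AH); auto.
  - intros [a b]. destruct (gg_inv AG a) as [a' [? [? [? ?]]]].
    destruct (gg_inv AH b) as [b' [? [? [? ?]]]].
    exists (a', b'); simpl. repeat split; f_equal; auto.
Qed.

(** * Crossed modules over group-groupoids *)

Section XModGGTheory.
Variable X : XModGG.
Notation G := (xG X). Notation H := (xH X).
Notation act := (xact X). Notation d1 := (xd1 X). Notation d0 := (xd0 X).
Notation s := (src G). Notation t := (tgt G). Notation e := (idn G). Notation c := (comp G).
Notation s' := (src H). Notation t' := (tgt H). Notation e' := (idn H). Notation c' := (comp H).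

Lemma xact_action : IsAction act. Proof. exact (proj1 (xact_ax X)). Qed.

Lemma xact_prod_gpgd : exists addO, IsGpGd (sd_add act) addO (@prod_src G H) (@prod_tgt G H)
  (@prod_idn G H) (@prod_comp G H).
Proof. destruct (xact_ax X) as [_ [addO [_ [_ [_ [_ Hp]]]]]]. exists addO; exact Hp. Qed.

Definition oact (y : obj H) (x : obj G) : obj G := s (act (e' y) (e x)).

(* In [G x H] the arrow [(b . a, b)] is [(0, b) + (a, 0)], and [prod_src] is additive. *)
Lemma src_act b a : s (act b a) = oact (s' b) (s a).
Proof.
  destruct xact_prod_gpgd as [addO Hp].
  assert (E1 := gg_s_hom Hp (gzero, b) (a, gzero)).
  assert (E2 := gg_s_hom Hp (gzero, e' (s' b)) (e (s a), gzero)).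
  unfold prod_src, sd_add in E1, E2; simpl in E1, E2.
  rewrite !src_idn in E2. rewrite <- E2 in E1. injection E1; intros _ E.
  rewrite !gadd0l in E. exact E.
Qed.

Lemma idn_oact y x : e (oact y x) = act (e' y) (e x).
Proof.
  destruct xact_prod_gpgd as [addO Hp].
  assert (E := gg_s_hom Hp (e gzero, e' y) (e x, e' gzero)).
  assert (F := gg_e_hom Hp (gzero, y) (x, gzero)).
  unfold prod_src, prod_idn, sd_add in E, F; simpl in E, F.
  rewrite !src_idn in E. rewrite <- E in F. simpl in F. injection F; intros _ F'.
  rewrite idn0, !gadd0l in F'. exact F'.
Qed.

Lemma tgt_act b a : t (act b a) = oact (t' b) (t a).
Proof.
  destruct xact_prod_gpgd as [addO Hp].
  assert (E1 := gg_t_hom Hp (gzero, b) (a, gzero)).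
  assert (E2 := gg_t_hom Hp (gzero, e' (t' b)) (e (t a), gzero)).
  unfold prod_tgt, sd_add in E1, E2; simpl in E1, E2.
  rewrite !tgt_idn in E2. rewrite <- E2 in E1. injection E1; intros _ E.
  rewrite !gadd0l in E. rewrite E, <- idn_oact, tgt_idn. reflexivity.
Qed.

Lemma comp_act a1 a2 b1 b2 : t a1 = s a2 -> t' b1 = s' b2 ->
  c (act b2 a2) (act b1 a1) = act (c' b2 b1) (c a2 a1).
Proof.
  intros Ha Hb. destruct xact_prod_gpgd as [addO Hp].
  assert (E := @gg_c_hom _ _ _ _ _ _ _ _ Hp (gzero, b1) (gzero, b2) (a1, gzero) (a2, gzero)).
  unfold prod_src, prod_tgt, prod_comp, sd_add in E; simpl in E.
  rewrite tgt0, src0, tgt0, src0, Hb, Ha in E. specialize (E eq_refl eq_refl).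
  injection E; intros _ E'. rewrite !gadd0l in E'. rewrite E', comp0l by apply tgt0.
  apply gadd0l.
Qed.

Lemma oact0 y : oact y gzero = gzero.
Proof. unfold oact. rewrite idn0, (act0 xact_action). apply src0. Qed.

Lemma oact_action : IsAction oact.
Proof.
  split; intros.
  - unfold oact. rewrite idn0, (act_zero xact_action). apply src_idn.
  - unfold oact at 1 2. rewrite idn_oact, idnD, (act_add xact_action). reflexivity.
  - unfold oact. rewrite idnD, (act_hom xact_action), srcD. reflexivity.
Qed.

(* Interchange law for [(e (t b) o b) . (x o 0)]. *)
Lemma act_ker_src b x : s x = gzero -> act b x = act (e' (t' b)) x.
Proof.
  intro Hx.
  assert (E := comp_act (a1 := gzero) (a2 := x) (b1 := b) (b2 := e' (t' b))).
  rewrite tgt0, Hx, src_idn in E. specialize (E eq_refl eq_refl).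
  rewrite (act0 xact_action), (gg_id_l (gpgd_ax H)), (comp0r Hx) in E.
  rewrite comp0r in E by (rewrite src_act, Hx; apply oact0).
  symmetry; exact E.
Qed.

Lemma act_ker_tgt b x : t x = gzero -> act b x = act (e' (s' b)) x.
Proof.
  intro Hx.
  assert (E := comp_act (a1 := x) (a2 := gzero) (b1 := e' (s' b)) (b2 := b)).
  rewrite src0, Hx, tgt_idn in E. specialize (E eq_refl eq_refl).
  rewrite (act0 xact_action), (gg_id_r (gpgd_ax H)), (comp0l Hx) in E.
  rewrite comp0l in E by (rewrite tgt_act, Hx; apply oact0).
  symmetry; exact E.
Qed.

Lemma d1D a b : d1 (a + b) = d1 a + d1 b. Proof. apply (gm_hom1 (xd_mor X)). Qed.
Lemma d1N a : d1 (- a) = - d1 a. Proof. apply homN, (gm_hom1 (xd_mor X)). Qed.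
Lemma d1_idn x : d1 (e x) = e' (d0 x). Proof. apply (gm_idn (xd_mor X)). Qed.
Lemma src_d1 a : s' (d1 a) = d0 (s a). Proof. apply (gm_src (xd_mor X)). Qed.
Lemma tgt_d1 a : t' (d1 a) = d0 (t a). Proof. apply (gm_tgt (xd_mor X)). Qed.

Lemma act_idn_d0 m x : act (e' (d0 m)) x = e m + x - e m.
Proof. rewrite <- d1_idn. apply (@xd_peiffer X). Qed.
End XModGGTheory.

(** * From crossed modules over group-groupoids to crossed squares *)

Definition KerSrc (K : GpGd) : Group := KerG (src_hom (G:=K)).

Section XSqOfXMod.
Variable X : XModGG.
Notation G := (xG X). Notation H := (xH X).
Notation act := (xact X). Notation d1 := (xd1 X). Notation d0 := (xd0 X).
Notation s := (src G). Notation t := (tgt G). Notation e := (idn G).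
Notation s' := (src H). Notation t' := (tgt H). Notation e' := (idn H).

Definition xsq_lam (l : KerSrc G) : obj G := t (proj1_sig l).
Lemma xsq_lam'_proof (l : KerSrc G) : s' (d1 (proj1_sig l)) = gzero.
Proof. rewrite src_d1, (proj2_sig l). apply hom0, (gm_hom0 (xd_mor X)). Qed.
Definition xsq_lam' (l : KerSrc G) : KerSrc H := exist _ _ (xsq_lam'_proof l).
Definition xsq_nu (n : KerSrc H) : obj H := t' (proj1_sig n).

Lemma xsq_aL_proof p (l : KerSrc G) : s (act (e' p) (proj1_sig l)) = gzero.
Proof. rewrite src_act, (proj2_sig l). apply oact0. Qed.
Definition xsq_aL (p : obj H) (l : KerSrc G) : KerSrc G := exist _ _ (xsq_aL_proof p l).
Lemma xsq_aN_proof p (n : KerSrc H) : s' (e' p + proj1_sig n - e' p) = gzero.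
Proof. rewrite !srcD, srcN, src_idn, (proj2_sig n). gsimpl. reflexivity. Qed.
Definition xsq_aN (p : obj H) (n : KerSrc H) : KerSrc H := exist _ _ (xsq_aN_proof p n).

Lemma xsq_h_proof (m : obj G) (n : KerSrc H) : s (e m - act (proj1_sig n) (e m)) = gzero.
Proof.
  rewrite srcD, srcN, src_act, (proj2_sig n), src_idn, (act_zero (oact_action X)).
  apply gaddNr.
Qed.
Definition xsq_h (m : obj G) (n : KerSrc H) : KerSrc G := exist _ _ (xsq_h_proof m n).

Lemma xsq_aL_action : IsAction xsq_aL.
Proof.
  split; intros; sig_ext.
  - rewrite idn0; apply (act_zero (xact_action X)).
  - rewrite idnD; apply (act_add (xact_action X)).
  - apply (act_hom (xact_action X)).
Qed.

Lemma xsq_aN_action : IsAction xsq_aN.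
Proof. split; intros; sig_ext; rewrite ?idn0, ?idnD; gsimpl; reflexivity. Qed.

Lemma xsq_mu_xmod : IsXModGp d0 (oact (X:=X)).
Proof.
  split.
  - exact (oact_action X).
  - exact (gm_hom0 (xd_mor X)).
  - intros p m. apply (idn_inj (G:=H)).
    rewrite <- d1_idn, idn_oact, (@xd_equiv X), d1_idn, !idnD, idnN. reflexivity.
  - intros m m'. unfold oact. rewrite act_idn_d0, !srcD, srcN, !src_idn. reflexivity.
Qed.

Lemma xsq_nu_xmod : IsXModGp xsq_nu xsq_aN.
Proof.
  split.
  - exact xsq_aN_action.
  - intros x y; apply tgtD.
  - intros p n; unfold xsq_nu; simpl. rewrite !tgtD, tgtN, tgt_idn. reflexivity.
  - intros n n'; sig_ext. apply ker_src_conj_idn; [apply (proj2_sig n) | apply (proj2_sig n')].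
Qed.

Lemma xsq_mulam_xmod : IsXModGp (fun l => d0 (xsq_lam l)) xsq_aL.
Proof.
  split.
  - exact xsq_aL_action.
  - intros x y; unfold xsq_lam; simpl. rewrite tgtD. apply (gm_hom0 (xd_mor X)).
  - intros p l; unfold xsq_lam; simpl. rewrite <- !tgt_d1, (@xd_equiv X), !tgtD, tgtN, tgt_idn.
    reflexivity.
  - intros l l'; sig_ext. unfold xsq_lam. rewrite <- tgt_d1, <- act_ker_src by apply (proj2_sig l').
    apply (@xd_peiffer X).
Qed.

(* [n] fixes [- l + e (t l)], an arrow into [0]. *)
Lemma xsq_h_lam_l l n : xsq_h (xsq_lam l) n = l + xsq_aL (xsq_nu n) (- l).
Proof.
  sig_ext. unfold xsq_nu, xsq_lam. destruct l as [l Hl]; destruct n as [n Hn]; simpl.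
  rewrite <- (@act_ker_src X n) by (rewrite srcN, Hl; apply gneg0).
  assert (Fix : act n (- l + e (t l)) = - l + e (t l)).
  { rewrite act_ker_tgt, Hn, idn0 by (rewrite tgtD, tgtN, tgt_idn; apply gaddNl).
    apply (act_zero (xact_action X)). }
  rewrite (act_hom (xact_action X)) in Fix. apply gaddLR in Fix. rewrite Fix. gsimpl.
  reflexivity.
Qed.

Lemma xsq_is_xsq : IsXSq xsq_lam xsq_lam' d0 xsq_nu xsq_aL (oact (X:=X)) xsq_aN xsq_h.
Proof.
  pose proof (xact_action X) as ha.
  split.
  - intros x y; apply tgtD.
  - intros x y; sig_ext; apply d1D.
  - exact (gm_hom0 (xd_mor X)).
  - exact (xmg_hom xsq_nu_xmod).
  - intro l; apply tgt_d1.
  - exact xsq_aL_action.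
  - exact (oact_action X).
  - exact xsq_aN_action.
  - intros p l; unfold xsq_lam; simpl. rewrite tgt_act, tgt_idn; reflexivity.
  - intros p l; sig_ext. apply (@xd_equiv X).
  - exact xsq_mu_xmod.
  - exact xsq_nu_xmod.
  - exact xsq_mulam_xmod.
  - intros m n; unfold xsq_lam, xsq_nu; simpl.
    rewrite tgtD, tgtN, tgt_idn, tgt_act, tgt_idn, (actN (oact_action X)). reflexivity.
  - intros m n; sig_ext. rewrite d1D, d1N, (@xd_equiv X), d1_idn. gsimpl. reflexivity.
  - exact xsq_h_lam_l.
  - intros m l; sig_ext. unfold xsq_lam'. rewrite act_idn_d0, (@xd_peiffer X). gsimpl.
    reflexivity.
  - intros m m' n; sig_ext. rewrite idnD, (act_hom ha), act_idn_d0. gsimpl. reflexivity.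
  - intros m n n'; sig_ext. unfold xsq_nu.
    rewrite <- act_ker_src by apply (xsq_h_proof m n').
    rewrite (act_add ha), (act_hom ha), (actN ha). gsimpl. reflexivity.
  - intros p m n; sig_ext.
    rewrite idn_oact, !(act_add ha), (actNK ha), (act_hom ha), (actN ha). reflexivity.
Qed.

Definition xsq_of : XSq :=
  {| sqL := KerSrc G; sqM := obj G; sqN := KerSrc H; sqP := obj H;
     sq_lam := xsq_lam; sq_lam' := xsq_lam'; sq_mu := d0; sq_nu := xsq_nu;
     sq_aL := xsq_aL; sq_aM := oact (X:=X); sq_aN := xsq_aN; sq_h := xsq_h;
     sq_ax := xsq_is_xsq |}.
End XSqOfXMod.

(** * From crossed squares to crossed modules over group-groupoids *)

Section XModOfXSq.
Variable S : XSq.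
Notation L := (sqL S). Notation M := (sqM S). Notation P := (sqP S).
Notation lam := (sq_lam S). Notation lam' := (sq_lam' S). Notation mu := (sq_mu S).
Notation nu := (sq_nu S). Notation aL := (sq_aL S). Notation aM := (sq_aM S).
Notation aN := (sq_aN S). Notation h := (sq_h S).
Notation ax := (sq_ax S).
Notation haL := (sq_actL ax). Notation haM := (sq_actM ax). Notation haN := (sq_actN ax).
Notation hlam' := (sq_hom_lam' ax). Notation hmu := (sq_hom_mu ax). Notation hnu := (sq_hom_nu ax).

Lemma h_0r m : h m gzero = gzero.
Proof.
  assert (E := cs4_r ax m gzero gzero). rewrite gadd0l, (hom0 hnu), (act_zero haL) in E.
  symmetry. apply (gaddIl (x := h m gzero)). rewrite gadd0r. exact E.
Qed.

Lemma mu_equiv p m : mu (aM p m) = p + mu m - p. Proof. apply (xmg_equiv (cs1_mu ax)). Qed.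
Lemma mu_peiffer m m' : aM (mu m) m' = m + m' - m. Proof. apply (xmg_peiffer (cs1_mu ax)). Qed.
Lemma nu_equiv p n : nu (aN p n) = p + nu n - p. Proof. apply (xmg_equiv (cs1_nu ax)). Qed.
Lemma nu_peiffer n n' : aN (nu n) n' = n + n' - n. Proof. apply (xmg_peiffer (cs1_nu ax)). Qed.
Lemma mulam_peiffer l l' : aL (mu (lam l)) l' = l + l' - l.
Proof. apply (xmg_peiffer (cs1_mulam ax)). Qed.

Lemma h_addr_rev m n1 n2 : h m (n2 + n1) = h m n1 + h (aM (nu n1) m) n2.
Proof.
  replace (n2 + n1) with (n1 + aN (nu (- n1)) n2) by (rewrite nu_peiffer; gsimpl; reflexivity).
  rewrite (cs4_r ax). f_equal.
  rewrite <- (cs5 ax), (actA haN), <- hnu, gaddNr, (hom0 hnu), (act_zero haN). reflexivity.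
Qed.

Lemma h_lam_addl l m n : h (lam l + m) n = l + h m n + aL (nu n) (- l).
Proof. rewrite (cs4_l ax), mulam_peiffer, (cs3_l ax). gsimpl. reflexivity. Qed.

Definition actLM (m : M) (l : L) : L := aL (mu m) l.

Lemma xmod_LM : IsXModGp lam actLM.
Proof.
  unfold actLM; split.
  - split; intros.
    + rewrite (hom0 hmu); apply (act_zero haL).
    + rewrite hmu; apply (act_add haL).
    + apply (act_hom haL).
  - exact (sq_hom_lam ax).
  - intros m l. rewrite (cs1_lam ax), mu_peiffer. reflexivity.
  - exact mulam_peiffer.
Qed.

Definition gpgdLM : GpGd := xmod_gpgd xmod_LM.
Definition gpgdNP : GpGd := xmod_gpgd (cs1_nu ax).

(* [(n, p) = (n, 0) + (0, p)]: [p] acts diagonally, then [n] fixes [m] and shifts [l]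
   by [- h (m, n)]. *)
Definition xmod_act (b : arr gpgdNP) (a : arr gpgdLM) : arr gpgdLM :=
  (aL (nu (fst b) + snd b) (fst a) - h (aM (snd b) (snd a)) (fst b), aM (snd b) (snd a)).

Lemma xmod_act_action : IsAction xmod_act.
Proof.
  split.
  - intros [l m]; unfold xmod_act; simpl.
    rewrite (hom0 hnu), gadd0l, (act_zero haL), (act_zero haM), h_0r. gsimpl. reflexivity.
  - intros [n p] [n' p'] [l m]; unfold xmod_act; simpl; unfold sdadd; simpl. f_equal.
    + rewrite hnu, nu_equiv, (cs4_r ax), (act_add haM), (cs5 ax). gsimpl.
      rewrite (act_hom haL), !(actN haL), !(actA haL). gsimpl. reflexivity.
    + apply (act_add haM).
  - intros [n p] [l m] [l' m']; unfold xmod_act; simpl; unfold sdadd; simpl. f_equal.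
    2: apply (act_hom haM).
    unfold actLM. rewrite (act_hom haM), (cs4_l ax), !(act_hom haL), !(actN haL), !(actA haL).
    gsimpl. apply f_equal. set (k := h (aM p m) n).
    assert (Conj : aL (nu n + (p + mu m)) l' - k = - k + aL (mu (aM p m) + (nu n + p)) l').
    { apply (gaddIl (x := k)). rewrite gaddA, <- mulam_peiffer, (actA haL). f_equal.
      unfold k. rewrite (cs2_l ax), hmu, (actN haM), (homN hmu), !mu_equiv. gsimpl.
      reflexivity. }
    rewrite gaddA, Conj. gsimpl. reflexivity.
Qed.

Definition obj_add : M * P -> M * P -> M * P := @sdadd M P aM.

Lemma xmod_src_hom : IsHom (sd_add xmod_act) obj_add (@prod_src gpgdLM gpgdNP).
Proof. intros [[l m] [n p]] [[l1 m1] [n1 p1]]. reflexivity. Qed.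

Lemma xmod_tgt_hom : IsHom (sd_add xmod_act) obj_add (@prod_tgt gpgdLM gpgdNP).
Proof.
  intros [[l m] [n p]] [[l1 m1] [n1 p1]].
  unfold prod_tgt, sd_add, xmod_act, obj_add, sdadd; simpl; unfold xmod_tgt, sdadd, actLM; simpl.
  f_equal.
  - pose proof (sq_hom_lam ax) as hlam.
    rewrite hlam, (cs1_lam ax), mu_peiffer, hlam, (homN hlam), (cs1_lam ax), (cs2_l ax).
    rewrite (act_hom haM). gsimpl. rewrite !(actN haM), !(actA haM). gsimpl. reflexivity.
  - rewrite hnu, nu_equiv. gsimpl. reflexivity.
Qed.

Lemma xmod_idn_hom : IsHom obj_add (sd_add xmod_act) (@prod_idn gpgdLM gpgdNP).
Proof.
  intros [m p] [m1 p1].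
  unfold prod_idn, sd_add, xmod_act, obj_add, sdadd; simpl; unfold xmod_idn, sdadd, actLM; simpl.
  rewrite h_0r; repeat rewrite ?(act0 haL), ?(act0 haN), ?gneg0, ?gadd0l, ?gadd0r.
  reflexivity.
Qed.

Lemma xmod_comp_hom a b a1 b1 : prod_tgt a = prod_src b -> prod_tgt a1 = prod_src b1 ->
  @prod_comp gpgdLM gpgdNP (sd_add xmod_act b b1) (sd_add xmod_act a a1) =
  sd_add xmod_act (prod_comp b a) (prod_comp b1 a1).
Proof.
  destruct a as [[l1 m1] [n1 p1]], b as [[l2 m2] [n2 p2]], a1 as [[l1' m1'] [n1' p1']],
    b1 as [[l2' m2'] [n2' p2']].
  unfold prod_tgt, prod_src, prod_comp, sd_add; simpl.
  unfold xmod_tgt, xmod_src, xmod_comp, xmod_act, actLM; simpl; unfold sdadd; simpl.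
  intros E1 E2; injection E1; injection E2; intros; subst.
  f_equal; f_equal.
  - rewrite hmu, (act_add haL (mu (lam l1)) (mu m1)), mulam_peiffer. gsimpl.
    do 2 apply f_equal. rewrite <- (act_hom haL). apply f_equal.
    rewrite (act_hom haM), <- (cs1_lam ax), (act_add haM (nu n1) p1 m1'), h_lam_addl, h_addr_rev.
    rewrite hnu, !(act_hom haL), !(actN haL), !(actA haL). gsimpl. reflexivity.
  - rewrite (act_add haN), nu_peiffer, (act_hom haN). gsimpl. reflexivity.
Qed.

Lemma xmod_act_derived : IsDerivedAction xmod_act.
Proof.
  split; [exact xmod_act_action|].
  exists obj_add, (@sdzero M P), (@sdneg M P aM).
  split; [exact (sd_group haM)|]. split; [exact (sd_group xmod_act_action)|].
  apply prod_gpgd.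
  - exact xmod_src_hom.
  - exact xmod_tgt_hom.
  - exact xmod_idn_hom.
  - exact xmod_comp_hom.
Qed.

Definition xmod_d1 (a : arr gpgdLM) : arr gpgdNP := (lam' (fst a), mu (snd a)).

Lemma xmod_d_mor : IsGpGdMor (G := gpgdLM) (H := gpgdNP) xmod_d1 mu.
Proof.
  split.
  - intros [l m] [l' m']; unfold xmod_d1; simpl; unfold sdadd, actLM; simpl.
    rewrite hlam', (cs1_lam' ax), hmu. reflexivity.
  - exact hmu.
  - intros [l m]; reflexivity.
  - intros [l m]; unfold xmod_d1; simpl; unfold xmod_tgt; simpl. rewrite (sq_comm ax), hmu.
    reflexivity.
  - intros x; unfold xmod_d1; simpl; unfold xmod_idn. rewrite (hom0 hlam'). reflexivity.
  - intros [l1 m1] [l2 m2] _; unfold xmod_d1; simpl; unfold xmod_comp; simpl. rewrite hlam'.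
    reflexivity.
Qed.

Lemma xmod_d_equiv b a : xmod_d1 (xmod_act b a) = b + xmod_d1 a - b.
Proof.
  destruct b as [n p], a as [l m]. unfold xmod_d1, xmod_act; simpl; unfold sdadd, sdneg; simpl.
  f_equal.
  - rewrite hlam', (homN hlam'), (cs1_lam' ax), (cs2_r ax).
    rewrite (act_add haN (nu n) p), nu_peiffer, mu_equiv, (actA haN), !(actN haN). gsimpl.
    reflexivity.
  - apply mu_equiv.
Qed.

Lemma xmod_d_peiffer a a1 : xmod_act (xmod_d1 a) a1 = a + a1 - a.
Proof.
  destruct a as [l m], a1 as [l1 m1]. unfold xmod_d1, xmod_act; simpl.
  unfold sdadd, sdneg, actLM; simpl. f_equal.
  - rewrite (sq_comm ax), (cs3_r ax), mu_peiffer.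
    rewrite (act_add haL (mu (lam l)) (mu m)), mulam_peiffer, (actA haL), <- !hmu, !(actN haL).
    gsimpl. reflexivity.
  - apply mu_peiffer.
Qed.

Definition xmod_of : XModGG :=
  {| xG := gpgdLM; xH := gpgdNP; xact := xmod_act; xact_ax := xmod_act_derived;
     xd1 := xmod_d1; xd0 := mu; xd_mor := xmod_d_mor; xd_equiv := xmod_d_equiv;
     xd_peiffer := xmod_d_peiffer |}.
End XModOfXSq.

(** * The functors and the equivalence *)

Section XSqMorOfXModMor.
Variables (X Y : XModGG) (f : XModMor X Y).
Notation hf := (mf_mor f). Notation hg := (mg_mor f).

Lemma xsq_morL_proof (l : KerSrc (xG X)) : src (xG Y) (mf1 f (proj1_sig l)) = gzero.
Proof. rewrite (gm_src hf), (proj2_sig l). apply (hom0 (gm_hom0 hf)). Qed.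
Lemma xsq_morN_proof (n : KerSrc (xH X)) : src (xH Y) (mg1 f (proj1_sig n)) = gzero.
Proof. rewrite (gm_src hg), (proj2_sig n). apply (hom0 (gm_hom0 hg)). Qed.
Definition xsq_morL (l : KerSrc (xG X)) : KerSrc (xG Y) := exist _ _ (xsq_morL_proof l).
Definition xsq_morN (n : KerSrc (xH X)) : KerSrc (xH Y) := exist _ _ (xsq_morN_proof n).

Definition xsq_mor : XSqMor (xsq_of X) (xsq_of Y).
Proof.
  refine (@Build_XSqMor (xsq_of X) (xsq_of Y) xsq_morL (mf0 f) xsq_morN (mg0 f)
            _ _ _ _ _ _ _ _ _ _ _ _); simpl.
  - intros x y; sig_ext. apply (gm_hom1 hf).
  - apply (gm_hom0 hf).
  - intros x y; sig_ext. apply (gm_hom1 hg).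
  - apply (gm_hom0 hg).
  - intros l; unfold xsq_lam; simpl. symmetry; apply (gm_tgt hf).
  - intros l; sig_ext. apply m_d1.
  - intros m; apply m_d0.
  - intros n; unfold xsq_nu; simpl. symmetry; apply (gm_tgt hg).
  - intros p l; sig_ext. rewrite m_act, (gm_idn hg). reflexivity.
  - intros p m; unfold oact. rewrite <- (gm_src hf), m_act, (gm_idn hg), (gm_idn hf).
    reflexivity.
  - intros p n; sig_ext. rewrite !(gm_hom1 hg), (homN (gm_hom1 hg)), (gm_idn hg). reflexivity.
  - intros m n; sig_ext. rewrite (gm_hom1 hf), (homN (gm_hom1 hf)), m_act, (gm_idn hf).
    reflexivity.
Defined.
End XSqMorOfXModMor.

Section XModMorOfXSqMor.
Variables (S T : XSq) (g : XSqMor S T).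

Definition xmod_morG (a : arr (gpgdLM S)) : arr (gpgdLM T) := (fL g (fst a), fM g (snd a)).
Definition xmod_morH (b : arr (gpgdNP S)) : arr (gpgdNP T) := (fN g (fst b), fP g (snd b)).

Lemma xmod_morG_mor : IsGpGdMor (G := gpgdLM S) (H := gpgdLM T) xmod_morG (fM g).
Proof.
  split.
  - intros [l m] [l' m']; unfold xmod_morG; simpl; unfold sdadd, actLM; simpl.
    rewrite (fL_hom g), (f_aL g), (f_mu g), (fM_hom g). reflexivity.
  - apply (fM_hom g).
  - intros [l m]; reflexivity.
  - intros [l m]; unfold xmod_morG; simpl; unfold xmod_tgt; simpl.
    rewrite (fM_hom g), (f_lam g). reflexivity.
  - intros x; unfold xmod_morG; simpl; unfold xmod_idn. rewrite (hom0 (fL_hom g)). reflexivity.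
  - intros [l1 m1] [l2 m2] _; unfold xmod_morG; simpl; unfold xmod_comp; simpl.
    rewrite (fL_hom g). reflexivity.
Qed.

Lemma xmod_morH_mor : IsGpGdMor (G := gpgdNP S) (H := gpgdNP T) xmod_morH (fP g).
Proof.
  split.
  - intros [n p] [n' p']; unfold xmod_morH; simpl; unfold sdadd; simpl.
    rewrite (fN_hom g), (f_aN g), (fP_hom g). reflexivity.
  - apply (fP_hom g).
  - intros [n p]; reflexivity.
  - intros [n p]; unfold xmod_morH; simpl; unfold xmod_tgt; simpl.
    rewrite (fP_hom g), (f_nu g). reflexivity.
  - intros x; unfold xmod_morH; simpl; unfold xmod_idn. rewrite (hom0 (fN_hom g)). reflexivity.
  - intros [n1 p1] [n2 p2] _; unfold xmod_morH; simpl; unfold xmod_comp; simpl.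
    rewrite (fN_hom g). reflexivity.
Qed.

Definition xmod_mor : XModMor (xmod_of S) (xmod_of T).
Proof.
  refine (@Build_XModMor (xmod_of S) (xmod_of T) xmod_morG (fM g) xmod_morH (fP g)
            xmod_morG_mor xmod_morH_mor _ _ _); simpl.
  - intros [l m]; unfold xmod_morH, xmod_morG, xmod_d1; simpl.
    rewrite (f_lam' g), (f_mu g). reflexivity.
  - intros m; apply (f_mu g).
  - intros [n p] [l m]; unfold xmod_morH, xmod_morG, xmod_act; simpl.
    rewrite (fL_hom g), (homN (fL_hom g)), (f_aL g), (fP_hom g), (f_nu g), (f_h g), (f_aM g).
    reflexivity.
Defined.
End XModMorOfXSqMor.

Definition XSqFunctor : Functor XMod_GpGd XSq_Gp.
Proof.
  refine (@Build_Functor XMod_GpGd XSq_Gp xsq_of (fun X Y f => xsq_mor f) _ _ _);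
    simpl; unfold XSqMor_eq; simpl.
  - intros X Y f g (E1 & E2 & E3 & E4). repeat split; intros; try sig_ext; auto.
  - intros X. repeat split; intros; try sig_ext; reflexivity.
  - intros X Y Z g f. repeat split; intros; try sig_ext; reflexivity.
Defined.

Definition XModFunctor : Functor XSq_Gp XMod_GpGd.
Proof.
  refine (@Build_Functor XSq_Gp XMod_GpGd xmod_of (fun S T g => xmod_mor g) _ _ _);
    simpl; unfold XModMor_eq; simpl; unfold xmod_morG, xmod_morH.
  - intros S T f g (E1 & E2 & E3 & E4). repeat split; intros; rewrite ?E1, ?E2, ?E3, ?E4;
      reflexivity.
  - intros S. repeat split; intros [x y]; reflexivity.
  - intros S T U g f. repeat split; intros; reflexivity.
Defined.

(* A group-groupoid is the semidirect product of its arrows out of [0] with its objects. *)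
Section SplitArrows.
Variables (K : GpGd) (act : obj K -> KerSrc K -> KerSrc K).
Variable hx : IsXModGp (fun l : KerSrc K => tgt K (proj1_sig l)) act.
Hypothesis act_conj : forall x l, proj1_sig (act x l) = idn K x + proj1_sig l - idn K x.
Notation s := (src K). Notation e := (idn K).

Lemma ker_part_proof (a : arr K) : s (a - e (s a)) = gzero.
Proof. rewrite srcD, srcN, src_idn. apply gaddNr. Qed.
Definition ker_part (a : arr K) : KerSrc K := exist _ _ (ker_part_proof a).

Definition split_arr (a : arr K) : arr (xmod_gpgd hx) := (ker_part a, s a).
Definition unsplit_arr (u : arr (xmod_gpgd hx)) : arr K := proj1_sig (fst u) + e (snd u).

Lemma split_arr_mor : IsGpGdMor (G := K) (H := xmod_gpgd hx) split_arr (fun x => x).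
Proof.
  split.
  - intros a b; unfold split_arr; simpl; unfold sdadd; simpl. f_equal; [|apply srcD].
    sig_ext. rewrite act_conj; simpl. rewrite !srcD, idnD. gsimpl. reflexivity.
  - intros x y; reflexivity.
  - intros a; reflexivity.
  - intros a; simpl; unfold xmod_tgt; simpl. rewrite tgtD, tgtN, tgt_idn. gsimpl. reflexivity.
  - intros x; unfold split_arr; simpl; unfold xmod_idn. f_equal; [sig_ext|]; rewrite src_idn.
    + apply gaddNr.
    + reflexivity.
  - intros a b Hab; unfold split_arr; simpl; unfold xmod_comp; simpl.
    rewrite (gg_s_comp (gpgd_ax K)) by exact Hab. f_equal. sig_ext.
    rewrite compE by exact Hab. gsimpl. rewrite !srcD, srcN, src_idn. gsimpl. reflexivity.
Qed.

Lemma unsplit_arr_mor : IsGpGdMor (G := xmod_gpgd hx) (H := K) unsplit_arr (fun x => x).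
Proof.
  split.
  - intros [l m] [l' m']; unfold unsplit_arr; simpl. rewrite act_conj, idnD. gsimpl.
    reflexivity.
  - intros x y; reflexivity.
  - intros [[l Hl] m]; unfold unsplit_arr; simpl. rewrite srcD, Hl, src_idn. apply gadd0l.
  - intros [[l Hl] m]; unfold unsplit_arr; simpl. rewrite tgtD, tgt_idn. reflexivity.
  - intros x; unfold unsplit_arr; simpl. apply gadd0l.
  - intros [[l1 H1] m1] [[l2 H2] m2] Hab; unfold unsplit_arr; simpl in *.
    unfold xmod_tgt, xmod_src in Hab; simpl in Hab.
    rewrite compE by (rewrite srcD, H2, src_idn, gadd0l, tgtD, tgt_idn; exact Hab).
    rewrite srcD, H2, src_idn, gadd0l. gsimpl. reflexivity.
Qed.

Lemma unsplit_split a : unsplit_arr (split_arr a) = a.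
Proof. unfold unsplit_arr, split_arr; simpl. gsimpl. reflexivity. Qed.

Lemma split_unsplit u : split_arr (unsplit_arr u) = u.
Proof.
  destruct u as [[l Hl] m]; unfold split_arr, unsplit_arr; simpl.
  assert (Src : s (l + e m) = m) by (rewrite srcD, Hl, src_idn; apply gadd0l).
  f_equal; [sig_ext|]; rewrite Src; [gsimpl|]; reflexivity.
Qed.
End SplitArrows.

Section Unit.
Variable X : XModGG.
Notation G := (xG X). Notation H := (xH X).
Notation act := (xact X).
Notation e := (idn G). Notation t' := (tgt H). Notation e' := (idn H).

Lemma actLM_conj m l :
  proj1_sig (actLM (S:=xsq_of X) m l) = e m + proj1_sig l - e m.
Proof. apply act_idn_d0. Qed.

Definition unit_xmodG : arr G -> arr (gpgdLM (xsq_of X)) :=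
  @split_arr G _ (xmod_LM (xsq_of X)).
Definition unit_xmodH : arr H -> arr (gpgdNP (xsq_of X)) :=
  @split_arr H _ (cs1_nu (sq_ax (xsq_of X))).
Definition unit_xmod_invG : arr (gpgdLM (xsq_of X)) -> arr G :=
  @unsplit_arr G _ (xmod_LM (xsq_of X)).
Definition unit_xmod_invH : arr (gpgdNP (xsq_of X)) -> arr H :=
  @unsplit_arr H _ (cs1_nu (sq_ax (xsq_of X))).

Definition unit_xmod : XModMor X (xmod_of (xsq_of X)).
Proof.
  refine (@Build_XModMor X (xmod_of (xsq_of X)) unit_xmodG (fun x => x) unit_xmodH (fun x => x)
            (split_arr_mor (xmod_LM (xsq_of X)) actLM_conj)
            (split_arr_mor (cs1_nu (sq_ax (xsq_of X))) (fun _ _ => eq_refl)) _ _ _); simpl.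
  - intros a; unfold unit_xmodG, unit_xmodH, split_arr, xmod_d1; simpl. rewrite src_d1.
    f_equal. sig_ext. rewrite d1D, d1N, d1_idn, src_d1. reflexivity.
  - reflexivity.
  - intros b a; unfold unit_xmodG, unit_xmodH, split_arr, xmod_act; simpl. rewrite src_act.
    f_equal. sig_ext. unfold xsq_nu; simpl. rewrite src_act, tgtD, tgtN, tgt_idn. gsimpl.
    rewrite <- (@act_ker_src X b) by apply ker_part_proof.
    rewrite idn_oact, (actA (xact_action X)). gsimpl.
    rewrite (act_hom (xact_action X)), (actN (xact_action X)). gsimpl. reflexivity.
Defined.

Definition unit_xmod_inv : XModMor (xmod_of (xsq_of X)) X.
Proof.
  refine (@Build_XModMor (xmod_of (xsq_of X)) X unit_xmod_invG (fun x => x)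
            unit_xmod_invH (fun x => x)
            (unsplit_arr_mor (xmod_LM (xsq_of X)) actLM_conj)
            (unsplit_arr_mor (cs1_nu (sq_ax (xsq_of X))) (fun _ _ => eq_refl)) _ _ _);
    simpl.
  - intros [l m]; unfold unit_xmod_invG, unit_xmod_invH, unsplit_arr, xmod_d1; simpl.
    rewrite d1D, d1_idn. reflexivity.
  - reflexivity.
  - intros [[n Hn] p] [[l Hl] m].
    unfold unit_xmod_invG, unit_xmod_invH, unsplit_arr, xmod_act; simpl; unfold xsq_nu; simpl.
    rewrite idn_oact, (act_hom (xact_action X)), (act_add (xact_action X)), idnD.
    rewrite (@act_ker_src X n (act (e' p) l)) by (rewrite src_act, Hl; apply oact0).
    rewrite (actA (xact_action X) (e' (t' n)) (e' p) l), <- idnD.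
    rewrite (actA (xact_action X) n (e' p) (e m)). gsimpl. reflexivity.
Defined.

Lemma unit_xmod_invK : XModMor_eq (XModMor_comp unit_xmod_inv unit_xmod) (XModMor_id X).
Proof. repeat split; intros; apply unsplit_split. Qed.

Lemma unit_xmodK : XModMor_eq (XModMor_comp unit_xmod unit_xmod_inv) (XModMor_id _).
Proof. repeat split; intros; apply split_unsplit. Qed.
End Unit.

Lemma unit_xmod_natural (X Y : XModGG) (f : XModMor X Y) :
  XModMor_eq (XModMor_comp (xmod_mor (xsq_mor f)) (unit_xmod X))
             (XModMor_comp (unit_xmod Y) f).
Proof.
  pose proof (mf_mor f) as hf; pose proof (mg_mor f) as hg.
  unfold XModMor_eq; simpl; unfold xmod_morG, xmod_morH, unit_xmodG, unit_xmodH, split_arr.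
  simpl. repeat split; intros; try reflexivity; f_equal.
  - sig_ext. rewrite (gm_hom1 hf), (homN (gm_hom1 hf)), (gm_idn hf), (gm_src hf). reflexivity.
  - symmetry; apply (gm_src hf).
  - sig_ext. rewrite (gm_hom1 hg), (homN (gm_hom1 hg)), (gm_idn hg), (gm_src hg). reflexivity.
  - symmetry; apply (gm_src hg).
Qed.

Section Counit.
Variable S : XSq.
Notation L := (sqL S). Notation N := (sqN S).
Notation ax := (sq_ax S).
Notation haL := (sq_actL ax). Notation haM := (sq_actM ax). Notation haN := (sq_actN ax).
Notation hmu := (sq_hom_mu ax). Notation hnu := (sq_hom_nu ax).

(* Arrows out of [0] in [L x| M] are the pairs [(l, 0)]. *)
Definition counit_xsqL (x : sqL (xsq_of (xmod_of S))) : L := fst (proj1_sig x).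
Definition counit_xsqN (x : sqN (xsq_of (xmod_of S))) : N := fst (proj1_sig x).

Definition counit_xsq : XSqMor (xsq_of (xmod_of S)) S.
Proof.
  refine (@Build_XSqMor (xsq_of (xmod_of S)) S counit_xsqL (fun x => x) counit_xsqN (fun x => x)
            _ _ _ _ _ _ _ _ _ _ _ _); unfold GpHom, IsHom; simpl;
    unfold counit_xsqL, counit_xsqN, xsq_lam, xsq_nu, xmod_act, actLM; simpl;
    unfold xmod_src, xmod_tgt, sdadd, sdneg; simpl.
  - intros [[l m] Hx] [[l' m'] Hy]; simpl in *. subst.
    rewrite (hom0 hmu), (act_zero haL). reflexivity.
  - reflexivity.
  - intros [[n p] Hx] [[n' p'] Hy]; simpl in *. subst. rewrite (act_zero haN). reflexivity.
  - reflexivity.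
  - intros [[l m] Hx]; simpl in *. subst. apply gadd0r.
  - reflexivity.
  - reflexivity.
  - intros [[n p] Hx]; simpl in *. subst. apply gadd0r.
  - intros p [[l m] Hx]; simpl in *. subst.
    rewrite (hom0 hnu), gadd0l, (act0 haM), h_0r, gneg0, gadd0r. reflexivity.
  - reflexivity.
  - intros p [[n q] Hx]; simpl in *. subst. rewrite gneg0, !(act0 haN), gadd0l, !gadd0r.
    reflexivity.
  - intros m [[n q] Hx]; simpl in *. subst.
    repeat rewrite ?gadd0l, ?gadd0r, ?(act0 haL), ?(act_zero haM), ?gneg0, ?gnegK.
    rewrite (actA (xmg_act (xmod_LM S))), gaddNr. apply (act_zero (xmg_act (xmod_LM S))).
Defined.

Definition counit_xsq_invL (l : L) : sqL (xsq_of (xmod_of S)) :=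
  exist (fun x : _ * _ => snd x = gzero) (l, gzero) eq_refl.
Definition counit_xsq_invN (n : N) : sqN (xsq_of (xmod_of S)) :=
  exist (fun x : _ * _ => snd x = gzero) (n, gzero) eq_refl.

Definition counit_xsq_inv : XSqMor S (xsq_of (xmod_of S)).
Proof.
  refine (@Build_XSqMor S (xsq_of (xmod_of S)) counit_xsq_invL (fun x => x) counit_xsq_invN
            (fun x => x) _ _ _ _ _ _ _ _ _ _ _ _); unfold GpHom, IsHom; simpl;
    intros; try sig_ext; unfold xsq_lam, xsq_nu, sdadd, sdneg, xmod_act, xmod_d1, actLM;
    simpl;
    repeat rewrite ?gadd0l, ?gadd0r, ?(act0 haL), ?(act0 haN), ?(act0 haM), ?(act_zero haM),
      ?(act_zero haL), ?(act_zero haN), ?gneg0, ?gnegK, ?(hom0 hmu), ?(hom0 hnu), ?h_0r, ?gaddNr;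
    try reflexivity.
  - symmetry; apply gadd0r.
  - symmetry; apply gadd0r.
  - rewrite (actA haL), <- hmu, gaddNr, (hom0 hmu), (act_zero haL). reflexivity.
Defined.

Lemma counit_xsq_invK :
  XSqMor_eq (XSqMor_comp counit_xsq_inv counit_xsq) (XSqMor_id (xsq_of (xmod_of S))).
Proof.
  repeat split; intros [[a b] Hx]; sig_ext; simpl in Hx; unfold xmod_src in Hx; simpl in Hx;
    subst; reflexivity.
Qed.

Lemma counit_xsqK : XSqMor_eq (XSqMor_comp counit_xsq counit_xsq_inv) (XSqMor_id S).
Proof. repeat split. Qed.
End Counit.

Lemma counit_xsq_natural (S T : XSq) (g : XSqMor S T) :
  XSqMor_eq (XSqMor_comp g (counit_xsq S))
            (XSqMor_comp (counit_xsq T) (xsq_mor (xmod_mor g))).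
Proof. repeat split. Qed.

Theorem mainTheorem2 : CatEquivalence XMod_GpGd XSq_Gp.
Proof.
  exists XSqFunctor, XModFunctor. split.
  - exists unit_xmod, unit_xmod_inv. split; [|split].
    + exact unit_xmod_invK.
    + exact unit_xmodK.
    + exact unit_xmod_natural.
  - exists counit_xsq, counit_xsq_inv. split; [|split].
    + exact counit_xsq_invK.
    + exact counit_xsqK.
    + exact counit_xsq_natural.
Qed.
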